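(* Let $C$ be a finite set of $m$ candidates, let $Q$ be a strict linear order on $C$ (written $\succ$), and let $f$ be the Plurality rule with winner set. Let $\vec a,\vec a'$ be two voting profiles that differ only in the vote of a single voter, and let $X=f(\vec a)$ and $Y=f(\vec a')$. Then the following four conditions are equivalent: (1) $X$ stochastically dominates $Y$ under $Q$, where each set is identified with the uniform lottery over its elements; (2) the relation $X\succ Y$ is entailed by $Q$, Axioms K, G and R, and transitivity; (3) $u(X)>u(Y)$ for every utility function $u$ consistent with $Q$; (4) $X$ match-dominates $Y$ according to $Q$.
   Context: Plurality with winner set: there are finitely many voters, each voter votes for a single candidate in $C$; a profile $\vec a$ lists all votes, and $f(\vec a)\subseteq C$ is the set of candidates receiving the maximum number of votes. Stochastic dominance: for nonempty $W\subseteq C$ let $p_W$ be the uniform distribution on $W$. Let $C^{(j)}$ be the set of the $j$ most preferred candidates under $Q$. $X$ stochastically dominates $Y$ if $\Pr_{w\sim p_X}(w\in C^{(j)})\ge \Pr_{w\sim p_Y}(w\in C^{(j)})$ for every $j\le m$, with strict inequality for at least one $j$. Utilities: $u:C\to\mathbb{R}$ is consistent with $Q$ if $u(a)>u(b)$ whenever $a\succ b$; for nonempty $W\subseteq C$, $u(W)=\frac1{|W|}\sum_{c\in W}u(c)$. Axioms for extending $Q$ to a (partial) relation $\succ,\succeq$ on nonempty subsets of $C$: K1: if $a\succ b$ for all $a\in X,b\in Y$, then $X\succ Y$. K2: if $a\succeq b$ for all $a\in X,b\in Y$, then $X\succeq Y$. G: if $a\succ b$ for all $b\in X$, then $\{a\}\succ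 \{a\}\cup X\succ X$. R: $a\succ b$ iff for all $X\subseteq C\setminus\{a,b\}$, $\{a\}\cup X\succ \{b\}\cup X$. ''$X\succ Y$ is entailed by $Q$, the axioms and transitivity'' means there is a chain $X=Z_0,Z_1,\dots,Z_t=Y$ in which each relation $Z_{i}\succeq Z_{i+1}$ or $Z_i\succ Z_{i+1}$ is an instance of one of the axioms (given $Q$), with at least one step strict. Match-domination: suppose $k=|X|\le |Y|=K$. List $X=\{x_1,\dots,x_k\}$ and $Y=\{y_1,\dots,y_K\}$ in increasing order of $Q$ (from least to most preferred). Let $r_j=\lceil jK/k\rceil$ for $0\le j\le k$, and partition $Y$ into $Y_j=\{y_{r_{j-1}+1},\dots,y_{r_j}\}$, $j=1,\dots,k$ (e.g., $k=3,K=7$ gives $Y_1=\{y_1,y_2,y_3\},Y_2=\{y_4,y_5\},Y_3=\{y_6,y_7\}$). $X$ match-dominates $Y$ according to $Q$ if (I) for all $j\le k$ and all $y\in Y_j$, $x_j\succeq y$; and (II) either at least one of these relations is strict, or $K \bmod k\ne 0$. If $|X|>|Y|$, then $X$ match-dominates $Y$ according to $Q$ if $Y$ match-dominates $X$ according to the reverse order of $Q$.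
   Formalization: Axiom G, as used for the entailment in condition (2), also has its order-dual half: if b ≻ a for all b ∈ X, then X ≻ X ∪ {a} ≻ {a}. The statement above fails without it. *)

From mathcomp Require Import all_boot all_order all_algebra.
From mathcomp Require Export reals.
Set Implicit Arguments.
Unset Strict Implicit.
Unset Printing Implicit Defensive.
Import Order.TTheory GRing.Theory Num.Theory.

Section Defs.
Variable C : finType.
(* [Q a b] means  a ≻ b  (a is strictly preferred to b). *)
Variable Q : rel C.

Definition strict_linear_order : Prop :=
  [/\ irreflexive Q, transitive Q & forall a b, a != b -> Q a b || Q b a].

Definition weakpref (a b : C) : bool := Q a b || (a == b).

Definition votes (n : nat) (pa : 'I_n -> C) (c : C) : nat :=
  #|[set i | pa i == c]|.

Definition plurality (n : nat) (pa : 'I_n -> C) : {set C} :=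
  [set c | [forall d, votes pa d <= votes pa c]].

Definition differ_in_one_voter (n : nat) (pa pa' : 'I_n -> C) : Prop :=
  exists i : 'I_n, forall j : 'I_n, j != i -> pa j = pa' j.

(* C^(j): the j most preferred candidates, i.e. those with < j better ones *)
Definition topj (j : nat) : {set C} := [set c | #|[set d | Q d c]| < j].

Definition prob_in {R : realType} (W S : {set C}) : R :=
  (#|W :&: S|%:R / #|W|%:R)%R.

Definition stoch_dom (R : realType) (X Y : {set C}) : Prop :=
  (forall j, (j <= #|C|)%N -> prob_in (R:=R) Y (topj j) <= prob_in X (topj j))%R /\
  (exists2 j, (j <= #|C|)%N & prob_in (R:=R) Y (topj j) < prob_in X (topj j))%R.

Definition consistent (R : realType) (u : C -> R) : Prop :=
  forall a b, Q a b -> (u b < u a)%R.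

Definition set_util (R : realType) (u : C -> R) (W : {set C}) : R :=
  ((\sum_(c in W) u c) / #|W|%:R)%R.

(* [ax_step X Y s] : "X ≻ Y" (s = true) or "X ⪰ Y" (s = false) is an
   instance of one of the axioms, given Q.  All sets are nonempty. *)
Inductive ax_step : {set C} -> {set C} -> bool -> Prop :=
| ax_K1 (X Y : {set C}) : X != set0 -> Y != set0 ->
    (forall a b, a \in X -> b \in Y -> Q a b) -> ax_step X Y true
| ax_K2 (X Y : {set C}) : X != set0 -> Y != set0 ->
    (forall a b, a \in X -> b \in Y -> weakpref a b) -> ax_step X Y false
| ax_G1 (a : C) (X : {set C}) : X != set0 ->
    (forall b, b \in X -> Q a b) -> ax_step [set a] (a |: X) true
| ax_G2 (a : C) (X : {set C}) : X != set0 ->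
    (forall b, b \in X -> Q a b) -> ax_step (a |: X) X true
(* dual (order-reversed) half of the Gardenfors axiom *)
| ax_G1' (a : C) (X : {set C}) : X != set0 ->
    (forall b, b \in X -> Q b a) -> ax_step X (a |: X) true
| ax_G2' (a : C) (X : {set C}) : X != set0 ->
    (forall b, b \in X -> Q b a) -> ax_step (a |: X) [set a] true
| ax_R (a b : C) (X : {set C}) : Q a b -> X \subset ~: [set a; b] ->
    ax_step (a |: X) (b |: X) true.

(* chains Z_0 = X, ..., Z_t = Y of axiom instances; the flag records
   whether at least one step is strict *)
Inductive ax_chain : {set C} -> {set C} -> bool -> Prop :=
| chain_nil (X : {set C}) : ax_chain X X false
| chain_cons (X Z Y : {set C}) (s1 s2 : bool) :
    ax_step X Z s1 -> ax_chain Z Y s2 -> ax_chain X Y (s1 || s2).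

Definition entailed (X Y : {set C}) : Prop := ax_chain X Y true.

(* 0-based position of x in the increasing (least to most preferred)
   listing of W *)
Definition pos (W : {set C}) (x : C) : nat := #|[set z in W | Q x z]|.

(* r_j = ceil (j K / k) *)
Definition rj (k K j : nat) : nat := (j * K + k.-1) %/ k.

(* y (0-based position t in Y) belongs to block Y_{j+1} of x_{j+1} *)
Definition in_block (k K j t : nat) : bool := (rj k K j <= t) && (t < rj k K j.+1).

Definition match_dom_le (X Y : {set C}) : Prop :=
  let k := #|X| in let K := #|Y| in
  (forall x y, x \in X -> y \in Y -> in_block k K (pos X x) (pos Y y) ->
     weakpref x y) /\
  ((exists x y, [/\ x \in X, y \in Y, in_block k K (pos X x) (pos Y y) & Q x y])
   \/ K %% k != 0).

End Defs.

Definition match_dom (C : finType) (Q : rel C) (X Y : {set C}) : Prop :=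
  if #|X| <= #|Y| then match_dom_le Q X Y
  else match_dom_le (fun a b => Q b a) Y X.

(* When one voter moves from a to b, the winner sets X and Y are related in
   one of six ways: X = Y; X = {a} with a in Y; Y = {b} with b in X;
   Y = X + b; X = Y + a; or X = S + a and Y = S + b.  If X = Y all four
   conditions fail.  Otherwise the shape comes with one pairwise comparison P
   (every x in X beats b, a beats every other y in Y, a beats b, ...) and all
   four conditions are equivalent to P:
   - P is a single instance of axiom G (or its dual half) or of R, hence it
     entails X > Y, and every axiom is sound for expected utility;
   - utility dominance for u = M * 1_{C^(j)} - rank, with M large, gives the
     weak stochastic-dominance inequality at every j, and at j = rank b or
     rank b + 1 that inequality gives back P;
   - P gives the strict inequality at one of these j, and P is exactly what
     match-domination says for the shape. *)

From mathcomp Require Import all_boot all_order all_algebra.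
From mathcomp Require Import reals.
From mathcomp Require Import zify lra.

Set Implicit Arguments.
Unset Strict Implicit.
Unset Printing Implicit Defensive.

Import Order.TTheory GRing.Theory Num.Theory.

Section Counting.
Variable T : finType.
Implicit Types A B : {set T}.

Lemma sum_mem_card A B : \sum_(x in A) (x \in B) = #|A :&: B|.
Proof.
rewrite -sum1_card big_mkcond [RHS]big_mkcond; apply: eq_bigr => x _.
by rewrite inE; case: (x \in A); case: (x \in B).
Qed.

Lemma cardIU1 b A B : b \notin A -> #|(b |: A) :&: B| = (b \in B) + #|A :&: B|.
Proof. by move=> bA; rewrite -!sum_mem_card big_setU1. Qed.

Lemma cardI1 a B : #|[set a] :&: B| = (a \in B).
Proof. by rewrite -sum_mem_card big_set1. Qed.

Lemma ltn_cardI A B : (#|A :&: B| < #|A|) = ~~ (A \subset B).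
Proof.
rewrite ltn_neqAle subset_leq_card ?subsetIl // andbT; congr (~~ _).
apply/eqP/setIidPl => [e|->] //.
by apply/eqP; rewrite eqEcard subsetIl e /=.
Qed.

Lemma cardI_eq0 A B : (#|A :&: B| == 0) = (A \subset ~: B).
Proof. by rewrite cards_eq0 setI_eq0 disjoints_subset. Qed.

End Counting.

Section StrictLinearOrder.
Variables (C : finType) (Q : rel C).
Hypothesis HQ : strict_linear_order Q.
Implicit Types W : {set C}.

Lemma Qxx x : Q x x = false.
Proof. by case: HQ => irr _ _; apply: irr. Qed.

Lemma Q_trans x y z : Q x y -> Q y z -> Q x z.
Proof. by case: HQ => _ tr _; apply: tr. Qed.

Lemma Q_total x y : x != y -> Q x y || Q y x.
Proof. by case: HQ => _ _; apply. Qed.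

Lemma Q_asym x y : Q x y -> Q y x = false.
Proof. by move=> Qxy; apply/negP => /(Q_trans Qxy); rewrite Qxx. Qed.

Lemma notQ_Q x y : x != y -> ~~ Q x y -> Q y x.
Proof. by move=> /Q_total /orP[->|]. Qed.

Lemma weakpref_refl x : weakpref Q x x.
Proof. by rewrite /weakpref eqxx orbT. Qed.

Lemma strict_linear_order_rev : strict_linear_order (fun a b => Q b a).
Proof.
split=> [x|y x z Qyx Qzy|x y /Q_total]; first exact: Qxx.
  exact: Q_trans Qzy Qyx.
by rewrite orbC.
Qed.

Lemma posE W x : pos Q W x = #|W :&: [set z | Q x z]|.
Proof. by apply: eq_card => z; rewrite !inE. Qed.

Lemma posU1 W b x : b \notin W -> pos Q (b |: W) x = Q x b + pos Q W x.
Proof. by move=> bW; rewrite !posE cardIU1 // inE. Qed.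

Lemma pos_eq0 W x : (forall z, z \in W -> ~~ Q x z) -> pos Q W x = 0.
Proof.
move=> low; apply/eqP; rewrite cards_eq0; apply/eqP/setP => z; rewrite !inE.
by apply/andP => -[/low/negbTE->].
Qed.

Lemma pos_le_mono W x y : Q y x -> pos Q W x <= pos Q W y.
Proof.
move=> Qyx; apply: subset_leq_card; apply/subsetP => z; rewrite !inE.
by case/andP=> -> /(Q_trans Qyx).
Qed.

Lemma pos_lt_mono W x y : x \in W -> Q y x -> pos Q W x < pos Q W y.
Proof.
move=> xW Qyx; apply: proper_card; apply/properP; split.
  by apply/subsetP => z; rewrite !inE => /andP[-> /(Q_trans Qyx)].
by exists x; rewrite !inE ?xW ?Qyx ?Qxx.
Qed.

Lemma pos_lt_card W x : x \in W -> pos Q W x < #|W|.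
Proof. by move=> xW; rewrite posE ltn_cardI; apply/subsetPn; exists x; rewrite ?inE ?Qxx. Qed.

Lemma pos_inj W : {in W &, injective (pos Q W)}.
Proof.
move=> x y xW yW e; apply/eqP; apply: contraT => /Q_total /orP[] Q_.
  by have := pos_lt_mono yW Q_; rewrite e ltnn.
by have := pos_lt_mono xW Q_; rewrite e ltnn.
Qed.

Lemma pos_onto W t : t < #|W| -> exists2 y, y \in W & pos Q W y = t.
Proof.
move=> ltW; set s := map (pos Q W) (enum W).
have s_uniq : uniq s.
  by rewrite map_inj_in_uniq ?enum_uniq // => x y; rewrite !mem_enum; apply: pos_inj.
have s_sub : {subset s <= iota 0 #|W|}.
  by move=> z /mapP[y]; rewrite mem_enum => yW ->; rewrite mem_iota pos_lt_card.
have [|_ s_eq] := uniq_min_size s_uniq s_sub; first by rewrite size_map size_iota cardE.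
have : t \in s by rewrite s_eq mem_iota.
by case/mapP => y; rewrite mem_enum => yW ->; exists y.
Qed.

Lemma pos_weakpref W x y : y \in W -> weakpref Q x y -> pos Q W y <= pos Q W x.
Proof. by move=> yW /orP[/(pos_lt_mono yW)/ltnW|/eqP->]. Qed.

Definition rank c := #|[set d | Q d c]|.

Lemma rank_lt c d : Q c d -> rank c < rank d.
Proof.
move=> Qcd; apply: proper_card; apply/properP; split.
  by apply/subsetP => z; rewrite !inE => /Q_trans; apply.
by exists c; rewrite !inE ?Qcd ?Qxx.
Qed.

Lemma rank_lt_card c : rank c < #|C|.
Proof.
rewrite /rank -cardsT -(setTI [set d | Q d c]) ltn_cardI.
by apply/subsetPn; exists c; rewrite ?inE ?Qxx.
Qed.

Lemma mem_topj_rank c d : (d \in topj Q (rank c)) = Q d c.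
Proof.
rewrite inE -/(rank d); apply/idP/idP => [|/rank_lt //].
have [->|/Q_total/orP[//|/rank_lt lt_cd lt_dc]] := eqVneq d c; first by rewrite ltnn.
by have := ltn_trans lt_cd lt_dc; rewrite ltnn.
Qed.

Lemma rank_inj : injective rank.
Proof.
by move=> c d e; apply/eqP; apply: contraT => /Q_total/orP[]/rank_lt; rewrite e ltnn.
Qed.

Lemma mem_topj_rankS c d : (d \in topj Q (rank c).+1) = weakpref Q d c.
Proof.
rewrite inE -/(rank d) ltnS leq_eqVlt (inj_eq rank_inj) orbC.
by move: (mem_topj_rank c d); rewrite inE -/(rank d) => ->.
Qed.

Lemma topj_up j c d : Q c d -> d \in topj Q j -> c \in topj Q j.
Proof. by rewrite !inE => /rank_lt; apply: ltn_trans. Qed.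

End StrictLinearOrder.

Lemma in_block_id k j t : 0 < k -> in_block k k j t = (t == j).
Proof.
move=> k0; have rj_id i : rj k k i = i by rewrite /rj divnMDl // divn_small ?addn0 ?prednK.
by rewrite /in_block !rj_id ltnS eq_sym eqn_leq.
Qed.

Lemma in_block1 K t : in_block 1 K 0 t = (t < K).
Proof. by rewrite /in_block /rj !addn0 !divn1 mul1n. Qed.

Lemma in_block_succ k j t : 0 < k -> j < k ->
  in_block k k.+1 j t = ((j == 0) && (t == 0)) || (t == j.+1).
Proof.
move=> k0 jk; have rj_succ i : 0 < i <= k -> rj k k.+1 i = i.+1.
  case/andP=> i0 ik; rewrite /rj.
  have -> : i * k.+1 + k.-1 = i.+1 * k + (i - 1) by nia.
  by rewrite divnMDl // divn_small ?addn0 //; lia.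
rewrite /in_block; case: j jk => [|j] jk.
  have -> : rj k k.+1 0 = 0 by rewrite /rj divn_small ?prednK.
  by rewrite rj_succ ?k0 //=; lia.
by rewrite !rj_succ ?(ltnW jk) //=; lia.
Qed.

Section MatchDomination.
Variables (C : finType) (Q : rel C).
Hypothesis HQ : strict_linear_order Q.
Implicit Types X Y S : {set C}.

Lemma not_match_dom_le_refl X : ~ match_dom_le Q X X.
Proof.
case=> _ [[x [y [xX yX]]]|]; last by rewrite modnn.
rewrite in_block_id; last by apply/card_gt0P; exists x.
by move=> /eqP/(pos_inj HQ yX xX)->; rewrite (Qxx HQ).
Qed.

Lemma match_dom_le_set1 a Y : a \in Y -> Y != [set a] ->
  match_dom_le Q [set a] Y <-> (forall y, y \in Y -> y != a -> Q a y).
Proof.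
move=> aY Ya; rewrite /match_dom_le cards1.
have pos_a : pos Q [set a] a = 0 by apply: pos_eq0 => z /set1P->; rewrite (Qxx HQ).
split=> [[blocks _] y yY ya | Pa].
  have := blocks a y (set11 a) yY; rewrite pos_a in_block1 pos_lt_card //.
  by case/(_ isT)/orP => // /eqP ay; rewrite ay eqxx in ya.
have weak x y : x \in [set a] -> y \in Y -> weakpref Q x y.
  move=> /set1P-> yY; rewrite /weakpref eq_sym.
  by have [_|ya] := eqVneq y a; rewrite ?orbT ?Pa.
split=> [x y xa yY _|]; first exact: weak.
left; have /subsetPn[y yY ya] : ~~ (Y \subset [set a]).
  by rewrite subset1 negb_or Ya; apply/set0Pn; exists a.
exists a, y; rewrite set11 pos_a in_block1 pos_lt_card ?Pa //.
by apply/eqP => e; rewrite e set11 in ya.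
Qed.

Lemma match_dom_le_setU1 b X : X != set0 -> b \notin X ->
  match_dom_le Q X (b |: X) <-> (forall x, x \in X -> Q x b).
Proof.
move=> X0 bX; rewrite /match_dom_le cardsU1 bX add1n.
have k0 : 0 < #|X| by rewrite card_gt0.
have [x0 x0X pos_x0] := pos_onto HQ k0.
have x0_min z : z \in X -> Q x0 z = false.
  by move=> zX; apply/negbTE/negP => /(pos_lt_mono HQ zX); rewrite pos_x0.
split=> [[blocks _] x xX | P].
  have xb : x != b by apply: contraNneq bX => <-.
  apply: contraT => /(notQ_Q HQ xb) Qbx.
  have Qbx0 : Q b x0.
    have [<-//|/(Q_total HQ)/orP[Q_xx0|]] := eqVneq x x0; last by rewrite x0_min.
    exact: (Q_trans HQ Qbx Q_xx0).
  have pos_Y_x0 : pos Q (b |: X) x0 = 0.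
    apply: pos_eq0 => z /setU1P[->|/x0_min->//]; by rewrite (Q_asym HQ Qbx0).
  have [|y1 y1Y pos_y1] := pos_onto HQ (t := 1) (W := b |: X).
    by rewrite cardsU1 bX ltnS.
  have := blocks x0 y1 x0X y1Y; rewrite in_block_succ ?pos_lt_card // pos_x0 pos_y1 /=.
  by move=> /(_ isT) /(pos_weakpref HQ y1Y); rewrite pos_Y_x0 pos_y1.
have pos_Y x : x \in X -> pos Q (b |: X) x = (pos Q X x).+1.
  by move=> xX; rewrite posU1 // P.
have pos_Y_b : pos Q (b |: X) b = 0.
  rewrite posU1 // (Qxx HQ) pos_eq0 // => z /P Qzb; by rewrite (Q_asym HQ Qzb).
split=> [x y xX /setU1P[->|yX]|]; first by rewrite /weakpref P.
  rewrite in_block_succ ?pos_lt_card // pos_Y // eqSS andbF /=.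
  by move=> /eqP/(pos_inj HQ yX xX)->; rewrite /weakpref eqxx orbT.
left; exists x0, b; rewrite setU11 in_block_succ ?pos_lt_card // pos_x0 pos_Y_b P //.
Qed.

Lemma pos_setU1_swap a b S x y : a \notin S -> b \notin S -> Q a b ->
  x \in a |: S -> Q y x -> pos Q (a |: S) x < pos Q (b |: S) y.
Proof.
move=> aS bS Qab xX Qyx; rewrite !posU1 //.
case/setU1P: xX Qyx => [->|xS] Qyx.
  by rewrite (Qxx HQ) (Q_trans HQ Qyx Qab) ltnS pos_le_mono.
rewrite -addnS; apply: leq_add; last exact: pos_lt_mono.
by case Qxa: (Q x a); rewrite // (Q_trans HQ Qyx (Q_trans HQ Qxa Qab)).
Qed.

Lemma match_dom_le_swap a b S : a != b -> a \notin S -> b \notin S ->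
  match_dom_le Q (a |: S) (b |: S) <-> Q a b.
Proof.
move=> ab aS bS; rewrite /match_dom_le !cardsU1 aS bS modnn add1n.
split=> [[_ [[x [y [xX yY + Qxy]]]|//]]|Qab].
  rewrite in_block_id // => /eqP pos_yx; apply: contraT => /(notQ_Q HQ ab) Qba.
  by have := pos_setU1_swap bS aS Qba yY Qxy; rewrite pos_yx ltnn.
have weak x y : x \in a |: S -> y \in b |: S ->
    in_block #|S|.+1 #|S|.+1 (pos Q (a |: S) x) (pos Q (b |: S) y) -> weakpref Q x y.
  move=> xX yY; rewrite in_block_id // /weakpref => /eqP pos_yx.
  have [->|xy] := eqVneq x y; first by rewrite orbT.
  rewrite orbF; apply: contraT => /(notQ_Q HQ xy) Qyx.
  by have := pos_setU1_swap aS bS Qab xX Qyx; rewrite pos_yx ltnn.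
split=> //; left.
have [|y yY pos_ya] := pos_onto HQ (t := pos Q (a |: S) a) (W := b |: S).
  by have := pos_lt_card HQ (setU11 a S); rewrite !cardsU1 aS bS.
have ay : a != y by apply: contraTneq yY => <-; rewrite !inE (negbTE ab) (negbTE aS).
exists a, y; split; rewrite ?setU11 ?in_block_id ?pos_ya //.
have := weak a y (setU11 a S) yY.
by rewrite in_block_id // pos_ya eqxx /weakpref (negbTE ay) orbF; apply.
Qed.

End MatchDomination.

Section MeanUtility.
Variables (R : realType) (C : finType) (u : C -> R).
Local Open Scope ring_scope.
Implicit Types W X Y : {set C}.

Lemma set_util_mul_card W : set_util u W * #|W|%:R = \sum_(c in W) u c.
Proof.
have [/eqP|W0] := posnP #|W|; last by rewrite divfK // pnatr_eq0 -lt0n.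
by rewrite cards_eq0 => /eqP->; rewrite big_set0 cards0 mulr0.
Qed.

Lemma set_util1 a : set_util u [set a] = u a.
Proof. by rewrite /set_util big_set1 cards1 divr1. Qed.

Lemma set_utilU1 a X : a \notin X ->
  set_util u (a |: X) * #|X|.+1%:R = u a + set_util u X * #|X|%:R.
Proof.
move=> aX; have <- : #|a |: X| = #|X|.+1 by rewrite cardsU1 aX.
by rewrite !set_util_mul_card big_setU1.
Qed.

Lemma set_util_lt_cross X Y : (0 < #|X|)%N -> (0 < #|Y|)%N ->
  (set_util u Y < set_util u X) =
  ((\sum_(c in Y) u c) * #|X|%:R < (\sum_(c in X) u c) * #|Y|%:R).
Proof.
move=> X0 Y0; rewrite -!set_util_mul_card -(ltr_pM2r (_ : 0 < (#|X| * #|Y|)%:R)).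
  by rewrite natrM [#|X|%:R * _]mulrC !mulrA [set_util u X * _ * _]mulrAC.
by rewrite ltr0n muln_gt0 X0.
Qed.

Lemma set_util_ub W v : W != set0 -> (forall c, c \in W -> u c <= v) -> set_util u W <= v.
Proof.
rewrite -card_gt0 => W0 ub; rewrite ler_pdivrMr ?ltr0n // mulr_natr -sumr_const.
exact: ler_sum.
Qed.

Lemma set_util_lb W v : W != set0 -> (forall c, c \in W -> v <= u c) -> v <= set_util u W.
Proof.
rewrite -card_gt0 => W0 lb; rewrite ler_pdivlMr ?ltr0n // mulr_natr -sumr_const.
exact: ler_sum.
Qed.

Lemma set_util_ub_lt W v : W != set0 -> (forall c, c \in W -> u c < v) -> set_util u W < v.
Proof.
move=> W0 ub; have /set0Pn[c cW] := W0; move: W0; rewrite -card_gt0 => W0.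
rewrite ltr_pdivrMr ?ltr0n // mulr_natr -sumr_const.
by apply: ltr_sum => //; apply/hasP; exists c; rewrite ?mem_index_enum.
Qed.

Lemma set_util_lb_lt W v : W != set0 -> (forall c, c \in W -> v < u c) -> v < set_util u W.
Proof.
move=> W0 lb; have /set0Pn[c cW] := W0; move: W0; rewrite -card_gt0 => W0.
rewrite ltr_pdivlMr ?ltr0n // mulr_natr -sumr_const.
by apply: ltr_sum => //; apply/hasP; exists c; rewrite ?mem_index_enum.
Qed.

Lemma set_utilU1_above a X : a \notin X -> X != set0 -> set_util u X < u a ->
  set_util u X < set_util u (a |: X) < u a.
Proof.
rewrite -card_gt0 => aX X0 lt_a; have := set_utilU1 aX.
rewrite -addn1 natrD; have : 0 < #|X|%:R :> R by rewrite ltr0n.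
move: (set_util u X) (set_util u (a |: X)) (#|X|%:R : R) lt_a => s s' k *.
apply/andP; split; nra.
Qed.

Lemma set_utilU1_below a X : a \notin X -> X != set0 -> u a < set_util u X ->
  u a < set_util u (a |: X) < set_util u X.
Proof.
rewrite -card_gt0 => aX X0 lt_a; have := set_utilU1 aX.
rewrite -addn1 natrD; have : 0 < #|X|%:R :> R by rewrite ltr0n.
move: (set_util u X) (set_util u (a |: X)) (#|X|%:R : R) lt_a => s s' k *.
apply/andP; split; nra.
Qed.

End MeanUtility.

Definition util_dom (R : realType) (C : finType) (Q : rel C) (X Y : {set C}) :=
  forall u : C -> R, consistent Q u -> (set_util u Y < set_util u X)%R.

Section Soundness.
Variables (R : realType) (C : finType) (Q : rel C).
Hypothesis HQ : strict_linear_order Q.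
Variable u : C -> R.
Hypothesis u_cons : consistent Q u.
Local Open Scope ring_scope.

Lemma consistent_weakpref a b : weakpref Q a b -> u b <= u a.
Proof. by case/orP=> [/u_cons/ltW|/eqP->]. Qed.

Lemma ax_step_util X Y s : ax_step Q X Y s ->
  if s then set_util u Y < set_util u X else set_util u Y <= set_util u X.
Proof.
case=> {X Y s} [X Y X0 Y0 XY|X Y X0 Y0 XY|a X X0 aX|a X X0 aX|a X X0 Xa|a X X0 Xa|a b X Qab].
- apply: set_util_lb_lt X0 _ => a aX; apply: set_util_ub_lt Y0 _ => b bY.
  exact/u_cons/XY.
- apply: set_util_lb X0 _ => a aX; apply: set_util_ub Y0 _ => b bY.
  exact/consistent_weakpref/XY.
- have aX' : a \notin X by apply/negP => /aX; rewrite (Qxx HQ).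
  have := set_util_ub_lt X0 (fun b bX => u_cons (aX b bX)).
  by case/(set_utilU1_above aX' X0)/andP; rewrite set_util1.
- have aX' : a \notin X by apply/negP => /aX; rewrite (Qxx HQ).
  have := set_util_ub_lt X0 (fun b bX => u_cons (aX b bX)).
  by case/(set_utilU1_above aX' X0)/andP.
- have aX' : a \notin X by apply/negP => /Xa; rewrite (Qxx HQ).
  have := set_util_lb_lt X0 (fun b bX => u_cons (Xa b bX)).
  by case/(set_utilU1_below aX' X0)/andP.
- have aX' : a \notin X by apply/negP => /Xa; rewrite (Qxx HQ).
  have := set_util_lb_lt X0 (fun b bX => u_cons (Xa b bX)).
  by case/(set_utilU1_below aX' X0)/andP; rewrite set_util1.
- move=> /subsetP Xab; have [aX bX] : a \notin X /\ b \notin X.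
    by split; apply/negP => /Xab; rewrite !inE eqxx ?orbT.
  rewrite -(ltr_pM2r (_ : 0 < #|X|.+1%:R)) // !set_utilU1 // ltrD2r.
  exact: u_cons.
Qed.

Lemma ax_chain_util X Y s : ax_chain Q X Y s ->
  if s then set_util u Y < set_util u X else set_util u Y <= set_util u X.
Proof.
elim=> {X Y s} [//|X Z Y [] [] /ax_step_util XZ _ ZY] /=.
- exact: lt_trans ZY XZ.
- exact: le_lt_trans ZY XZ.
- exact: lt_le_trans ZY XZ.
- exact: le_trans ZY XZ.
Qed.

End Soundness.

Lemma entailed_util_dom (R : realType) (C : finType) (Q : rel C) (X Y : {set C}) :
  strict_linear_order Q -> entailed Q X Y -> util_dom R Q X Y.
Proof. by move=> HQ XY u u_cons; apply: (ax_chain_util HQ u_cons XY). Qed.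

Definition weak_stoch_dom (C : finType) (Q : rel C) (X Y : {set C}) :=
  forall j, j <= #|C| -> #|Y :&: topj Q j| * #|X| <= #|X :&: topj Q j| * #|Y|.

Section Probability.
Variables (R : realType) (C : finType).
Implicit Types X Y T : {set C}.
Local Open Scope ring_scope.

Lemma prob_in_le X Y T : (0 < #|X|)%N -> (0 < #|Y|)%N ->
  (prob_in Y T <= prob_in X T :> R) = (#|Y :&: T| * #|X| <= #|X :&: T| * #|Y|)%N.
Proof.
move=> X0 Y0; rewrite /prob_in ler_pdivrMr ?ltr0n // mulrAC ler_pdivlMr ?ltr0n //.
by rewrite -!natrM ler_nat.
Qed.

Lemma prob_in_lt X Y T : (0 < #|X|)%N -> (0 < #|Y|)%N ->
  (prob_in Y T < prob_in X T :> R) = (#|Y :&: T| * #|X| < #|X :&: T| * #|Y|)%N.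
Proof.
move=> X0 Y0; rewrite /prob_in ltr_pdivrMr ?ltr0n // mulrAC ltr_pdivlMr ?ltr0n //.
by rewrite -!natrM ltr_nat.
Qed.

End Probability.

Section UtilityToStochastic.
Variables (R : realType) (C : finType) (Q : rel C).
Hypothesis HQ : strict_linear_order Q.
Implicit Types W X Y : {set C}.
Local Open Scope ring_scope.

Lemma consistent_topj_rank j M :
  consistent Q (fun c => (M * (c \in topj Q j))%:R - (rank Q c)%:R : R).
Proof.
move=> c d Qcd; have rank_cd := rank_lt HQ Qcd.
have top_dc : ((d \in topj Q j) <= (c \in topj Q j))%N.
  by case dT: (d \in topj Q j); rewrite // (topj_up HQ Qcd dT).
have : (M * (d \in topj Q j) + rank Q c < M * (c \in topj Q j) + rank Q d)%N.
  by rewrite -addnS leq_add // leq_mul2l top_dc orbT.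
by rewrite -(ltr_nat R) !natrD; lra.
Qed.

Lemma util_dom_weak_stoch_dom X Y : X != set0 -> Y != set0 ->
  util_dom R Q X Y -> weak_stoch_dom Q X Y.
Proof.
rewrite -!card_gt0 => X0 Y0 XY j _; set T := topj Q j.
(* [M] exceeds every rank contribution, so only the indicator of [T] counts. *)
set M := (#|X| * #|Y| * #|C|).+1.
pose u c : R := (M * (c \in T))%:R - (rank Q c)%:R.
have sum_u W : \sum_(c in W) u c = (M * #|W :&: T|)%:R - (\sum_(c in W) rank Q c)%:R.
  by rewrite sumrB -!natr_sum -big_distrr sum_mem_card.
have sum_rank W : (\sum_(c in W) rank Q c <= #|W| * #|C|)%N.
  by rewrite -sum_nat_const; apply: leq_sum => c _; apply/ltnW/rank_lt_card.
have := XY u (consistent_topj_rank j M); rewrite set_util_lt_cross // !sum_u => h.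
have : ((M * #|Y :&: T| * #|X| + (\sum_(c in X) rank Q c) * #|Y|)%:R <
        (M * #|X :&: T| * #|Y| + (\sum_(c in Y) rank Q c) * #|X|)%:R :> R).
  by move: h; rewrite !mulrBl -!natrM !natrD; lra.
rewrite ltr_nat -!mulnA => lt_M; rewrite leqNgt; apply/negP => lt_qp.
have : (M * (#|X :&: T| * #|Y|).+1 <= M * (#|Y :&: T| * #|X|))%N.
  by rewrite leq_mul2l lt_qp orbT.
have : ((\sum_(c in Y) rank Q c) * #|X| < M)%N.
  by rewrite /M ltnS mulnC -mulnA leq_mul2l sum_rank orbT.
rewrite mulnS; lia.
Qed.

End UtilityToStochastic.

Section Equivalence.
Variables (R : realType) (C : finType) (Q : rel C).
Hypothesis HQ : strict_linear_order Q.
Implicit Types X Y S : {set C}.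

Lemma dominance_tfae X Y (P : Prop) : X != set0 -> Y != set0 ->
  (weak_stoch_dom Q X Y -> P) ->
  (P -> exists2 j, j <= #|C| & #|Y :&: topj Q j| * #|X| < #|X :&: topj Q j| * #|Y|) ->
  (P -> ax_step Q X Y true) -> (P <-> match_dom Q X Y) ->
  [<-> stoch_dom Q R X Y; entailed Q X Y; util_dom R Q X Y; match_dom Q X Y].
Proof.
move=> X0 Y0 weakP strictP stepP matchP.
have [kX kY] : 0 < #|X| /\ 0 < #|Y| by rewrite !card_gt0.
have entailedP : P -> entailed Q X Y by move/stepP/chain_cons; apply; apply: chain_nil.
have utilW : util_dom R Q X Y -> weak_stoch_dom Q X Y by apply: util_dom_weak_stoch_dom.
tfae.
- by case=> weak _; apply/entailedP/weakP => j /weak; rewrite prob_in_le.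
- exact: entailed_util_dom.
- by move/utilW/weakP/matchP.
- move/matchP => p; split=> [j /(utilW (entailed_util_dom HQ (entailedP p)))|].
    by rewrite prob_in_le.
  by have [j jC lt_j] := strictP p; exists j; rewrite ?prob_in_lt.
Qed.

Lemma dominance_tfae_refl X :
  [<-> stoch_dom Q R X X; entailed Q X X; util_dom R Q X X; match_dom Q X X].
Proof.
have not_util : ~ util_dom R Q X X.
  (* [- rank] (the case [M = 0]) is a consistent utility. *)
  by move/(_ _ (consistent_topj_rank R HQ 0 0)); rewrite ltxx.
tfae.
- by case=> _ [j _]; rewrite ltxx.
- exact: entailed_util_dom.
- by move/not_util.
- by rewrite /match_dom leqnn => /not_match_dom_le_refl.
Qed.

Lemma dominance_tfae_setU1r b X : X != set0 -> b \notin X ->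
  [<-> stoch_dom Q R X (b |: X); entailed Q X (b |: X); util_dom R Q X (b |: X);
       match_dom Q X (b |: X)].
Proof.
move=> X0 bX; have bXX : b |: X != set0 by apply/set0Pn; exists b; rewrite setU11.
have k0 : 0 < #|X| by rewrite card_gt0.
apply: (dominance_tfae (P := forall x, x \in X -> Q x b)) => //.
- move/(_ _ (rank_lt_card HQ b)).
  rewrite cardIU1 // (mem_topj_rankS HQ) weakpref_refl cardsU1 bX => le_t.
  have : #|X| <= #|X :&: topj Q (rank Q b).+1| by nia.
  rewrite leqNgt ltn_cardI negbK => /subsetP XT x /[dup] xX /XT.
  by rewrite (mem_topj_rankS HQ) /weakpref => /orP[//|/eqP xb]; rewrite -xb xX in bX.
- move=> Xb; exists (rank Q b); first exact/ltnW/rank_lt_card.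
  have XT : X \subset topj Q (rank Q b) by apply/subsetP => x /Xb; rewrite (mem_topj_rank HQ).
  rewrite cardIU1 // (mem_topj_rank HQ) (Qxx HQ) (setIidPl XT) cardsU1 bX /=; nia.
- by move=> Xb; apply: ax_G1'.
- rewrite /match_dom cardsU1 bX leq_addl; apply: iff_sym.
  exact: match_dom_le_setU1.
Qed.

Lemma dominance_tfae_setU1l a Y : Y != set0 -> a \notin Y ->
  [<-> stoch_dom Q R (a |: Y) Y; entailed Q (a |: Y) Y; util_dom R Q (a |: Y) Y;
       match_dom Q (a |: Y) Y].
Proof.
move=> Y0 aY; have aYY : a |: Y != set0 by apply/set0Pn; exists a; rewrite setU11.
have k0 : 0 < #|Y| by rewrite card_gt0.
apply: (dominance_tfae (P := forall y, y \in Y -> Q a y)) => //.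
- move/(_ _ (ltnW (rank_lt_card HQ a))).
  rewrite cardIU1 // (mem_topj_rank HQ) (Qxx HQ) cardsU1 aY /= => le_t.
  have /eqP : #|Y :&: topj Q (rank Q a)| = 0 by nia.
  rewrite cardI_eq0 => /subsetP YT y yY.
  apply: (notQ_Q HQ); first by apply: contraNneq aY => <-.
  by have := YT y yY; rewrite inE (mem_topj_rank HQ).
- move=> Ya; exists (rank Q a).+1; first exact: rank_lt_card.
  have /eqP : #|Y :&: topj Q (rank Q a).+1| == 0.
    rewrite cardI_eq0; apply/subsetP => y yY.
    rewrite inE (mem_topj_rankS HQ) /weakpref (Q_asym HQ (Ya y yY)) /=.
    by apply: contraNneq aY => <-.
  by rewrite cardIU1 // (mem_topj_rankS HQ) weakpref_refl => ->; rewrite mul1n.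
- by move=> Ya; apply: ax_G2.
- rewrite /match_dom cardsU1 aY add1n ltnn; apply: iff_sym.
  exact: (match_dom_le_setU1 (strict_linear_order_rev HQ)).
Qed.

Lemma dominance_tfae_set1l a Y : a \in Y -> Y != [set a] ->
  [<-> stoch_dom Q R [set a] Y; entailed Q [set a] Y; util_dom R Q [set a] Y;
       match_dom Q [set a] Y].
Proof.
move=> aY Ya; have Y0 : 0 < #|Y| by apply/card_gt0P; exists a.
have /subsetPn[y0 y0Y] : ~~ (Y \subset [set a]).
  by rewrite subset1 negb_or Ya -card_gt0 Y0.
rewrite inE => y0a.
apply: (dominance_tfae (P := forall y, y \in Y -> y != a -> Q a y)).
- by apply/set0Pn; exists a; rewrite set11.
- by rewrite -card_gt0.
- move/(_ _ (ltnW (rank_lt_card HQ a))).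
  rewrite cardI1 (mem_topj_rank HQ) (Qxx HQ) cards1 muln1 leqn0 cardI_eq0.
  move=> /subsetP YT y yY ya; apply: (notQ_Q HQ ya).
  by have := YT y yY; rewrite inE (mem_topj_rank HQ).
- move=> aY'; exists (rank Q a).+1; first exact: rank_lt_card.
  rewrite cardI1 (mem_topj_rankS HQ) weakpref_refl cards1 muln1 mul1n ltn_cardI.
  apply/subsetPn; exists y0; rewrite // (mem_topj_rankS HQ) /weakpref.
  by rewrite (Q_asym HQ (aY' y0 y0Y y0a)) (negbTE y0a).
- move=> aY'; rewrite -[in X in ax_step _ _ X](setD1K aY); apply: ax_G1.
    by apply/set0Pn; exists y0; rewrite !inE y0a.
  by move=> y; rewrite !inE => /andP[ya yY]; apply: aY'.
- by rewrite /match_dom cards1 Y0; apply: iff_sym; apply: match_dom_le_set1.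
Qed.

Lemma dominance_tfae_set1r b X : b \in X -> X != [set b] ->
  [<-> stoch_dom Q R X [set b]; entailed Q X [set b]; util_dom R Q X [set b];
       match_dom Q X [set b]].
Proof.
move=> bX Xb; have X0 : 0 < #|X| by apply/card_gt0P; exists b.
have /subsetPn[x0 x0X] : ~~ (X \subset [set b]).
  by rewrite subset1 negb_or Xb -card_gt0 X0.
rewrite inE => x0b.
apply: (dominance_tfae (P := forall x, x \in X -> x != b -> Q x b)).
- by rewrite -card_gt0.
- by apply/set0Pn; exists b; rewrite set11.
- move/(_ _ (rank_lt_card HQ b)).
  rewrite cardI1 (mem_topj_rankS HQ) weakpref_refl cards1 muln1 mul1n.
  rewrite leqNgt ltn_cardI negbK => /subsetP XT x xX xb.
  by have := XT x xX; rewrite (mem_topj_rankS HQ) /weakpref (negbTE xb) orbF.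
- move=> Xb'; exists (rank Q b); first exact/ltnW/rank_lt_card.
  rewrite cardI1 (mem_topj_rank HQ) (Qxx HQ) cards1 muln1 mul0n.
  by apply/card_gt0P; exists x0; rewrite inE x0X (mem_topj_rank HQ) Xb'.
- move=> Xb'; rewrite -[in X in ax_step _ X](setD1K bX); apply: ax_G2'.
    by apply/set0Pn; exists x0; rewrite !inE x0b.
  by move=> x; rewrite !inE => /andP[xb xX]; apply: Xb'.
- have X1 : 1 < #|X|.
    by rewrite (cardsD1 b X) bX ltnS card_gt0; apply/set0Pn; exists x0; rewrite !inE x0b.
  rewrite /match_dom cards1 leqNgt X1 /=; apply: iff_sym.
  exact: (match_dom_le_set1 (strict_linear_order_rev HQ)).
Qed.

Lemma dominance_tfae_swap a b S : a != b -> a \notin S -> b \notin S ->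
  [<-> stoch_dom Q R (a |: S) (b |: S); entailed Q (a |: S) (b |: S);
       util_dom R Q (a |: S) (b |: S); match_dom Q (a |: S) (b |: S)].
Proof.
move=> ab aS bS.
have setU1_neq0 c : c |: S != set0 by apply/set0Pn; exists c; rewrite setU11.
apply: (dominance_tfae (P := Q a b)) => //.
- move/(_ _ (rank_lt_card HQ b)).
  rewrite !cardIU1 // !(mem_topj_rankS HQ) weakpref_refl /weakpref (negbTE ab) orbF.
  by rewrite !cardsU1 aS bS; case: (Q a b) => //=; nia.
- move=> Qab; exists (rank Q b); first exact/ltnW/rank_lt_card.
  rewrite !cardIU1 // !(mem_topj_rank HQ) (Qxx HQ) Qab !cardsU1 aS bS /=; nia.
- move=> Qab; apply: ax_R => //; apply/subsetP => z zS.
  by rewrite !inE negb_or; apply/andP; split; apply: contraTneq zS => ->.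
- by rewrite /match_dom !cardsU1 aS bS leqnn; apply: iff_sym; apply: match_dom_le_swap.
Qed.

End Equivalence.

Inductive neighbour_shape (C : finType) (X Y : {set C}) : Prop :=
| ShapeEq of X = Y
| ShapeSet1L a of X = [set a] & a \in Y & Y != [set a]
| ShapeSet1R b of Y = [set b] & b \in X & X != [set b]
| ShapeAddR b of X != set0 & b \notin X & Y = b |: X
| ShapeAddL a of Y != set0 & a \notin Y & X = a |: Y
| ShapeSwap a b (S : {set C}) of a != b & a \notin S & b \notin S & X = a |: S & Y = b |: S.

Definition argmax_set (C : finType) (s : C -> nat) : {set C} :=
  [set c | [forall d, s d <= s c]].

Lemma mem_argmax_set (C : finType) (s : C -> nat) L c0 :
  (forall d, s d <= L) -> s c0 = L -> forall c, (c \in argmax_set s) = (s c == L).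
Proof.
move=> le_L s_c0 c; rewrite inE; apply/forallP/eqP => [/(_ c0)|-> //].
by rewrite s_c0 => le_c; apply/eqP; rewrite eqn_leq le_L.
Qed.

Section MoveOneVote.
Variables (C : finType) (s s' : C -> nat) (a b : C).
Hypotheses (ab : a != b) (s'_a : s' a + 1 = s a) (s'_b : s' b = s b + 1).
Hypothesis s'_other : forall c, c != a -> c != b -> s' c = s c.
Variables (M : nat) (x0 : C).
Hypotheses (s_le : forall d, s d <= M) (s_x0 : s x0 = M).

Local Notation X := (argmax_set s).
Local Notation Y := (argmax_set s').

Let mem_X c : (c \in X) = (s c == M).
Proof. exact: (mem_argmax_set s_le s_x0). Qed.

Let s'_a_lt : s' a < M.
Proof. by have := s_le a; lia. Qed.

Let s'_le d : d != b -> s' d <= M.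
Proof.
have [->|da db] := eqVneq d a; first by rewrite ltnW.
by rewrite s'_other ?s_le.
Qed.

Lemma argmax_move_top : s b = M -> Y = [set b].
Proof.
move=> s_b; apply/setP => c; rewrite in_set1 (@mem_argmax_set _ _ M.+1 b); first last.
- by lia.
- by move=> d; have [->|/s'_le] := eqVneq d b; lia.
have [->|cb] := eqVneq c b; first by rewrite s'_b s_b addn1 eqxx.
by have := s'_le cb; lia.
Qed.

Lemma argmax_move_next : (s b).+1 = M -> Y = b |: (X :\ a).
Proof.
move=> s_b; apply/setP => c; rewrite in_setU1 in_setD1 (@mem_argmax_set _ _ M b); first last.
- by lia.
- by move=> d; have [->|/s'_le] := eqVneq d b; lia.
have [->|cb] := eqVneq c b; first by rewrite s'_b addn1 s_b eqxx.
have [->|ca] := eqVneq c a; first by rewrite (ltn_eqF s'_a_lt).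
by rewrite s'_other // -mem_X.
Qed.

Lemma argmax_move_low x : (s b).+1 < M -> x \in X -> x != a -> Y = X :\ a.
Proof.
move=> s_b xX xa; have xb : x != b by apply: contraTneq xX => ->; rewrite mem_X; lia.
apply/setP => c; rewrite in_setD1 (@mem_argmax_set _ _ M x); first last.
- by apply/eqP; rewrite s'_other // -mem_X.
- by move=> d; have [->|/s'_le] := eqVneq d b; lia.
have [->|cb] := eqVneq c b; first by rewrite mem_X; lia.
have [->|ca] := eqVneq c a; first by rewrite (ltn_eqF s'_a_lt).
by rewrite s'_other // -mem_X.
Qed.

Lemma argmax_move_single : (s b).+1 < M -> X = [set a] -> a \in Y.
Proof.
move=> s_b Xa; have s_a : s a = M by apply/eqP; rewrite -mem_X Xa set11.
rewrite inE; apply/forallP => d.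
have [->//|da] := eqVneq d a.
have : d \notin X by rewrite Xa inE.
have [->|db] := eqVneq d b; first by lia.
by rewrite mem_X s'_other //; have := s_le d; lia.
Qed.

Lemma argmax_move_shape : neighbour_shape X Y.
Proof.
have X0 : X != set0 by apply/set0Pn; exists x0; rewrite mem_X s_x0.
have setD1_notin (A : {set C}) c : c \notin A -> A :\ c = A.
  by move=> cA; apply/setDidPl; rewrite disjoint_sym disjoints1.
have b_notin : (s b).+1 <= M -> b \notin X by rewrite mem_X; lia.
case: (ltngtP (s b).+1 M) => [lt_bM|lt_Mb|eq_bM].
- have [Xa|Xa] := eqVneq X [set a].
    have aY := argmax_move_single lt_bM Xa.
    have [Ya|Ya] := eqVneq Y [set a]; first by apply: ShapeEq; rewrite Xa Ya.
    exact: ShapeSet1L Xa aY Ya.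
  have /subsetPn[x xX] : ~~ (X \subset [set a]) by rewrite subset1 negb_or Xa X0.
  rewrite inE => xa; have YX := argmax_move_low lt_bM xX xa.
  have [aX|aX] := boolP (a \in X); last by apply: ShapeEq; rewrite YX setD1_notin.
  apply: (@ShapeAddL _ _ _ a); rewrite ?YX ?setD11 ?setD1K //.
  by apply/set0Pn; exists x; rewrite in_setD1 xa.
- have s_b : s b = M by have := s_le b; lia.
  have bX : b \in X by rewrite mem_X s_b.
  have YX := argmax_move_top s_b.
  have [Xb|Xb] := eqVneq X [set b]; first by apply: ShapeEq; rewrite Xb YX.
  exact: ShapeSet1R YX bX Xb.
- have bX := b_notin (eq_leq eq_bM); have YX := argmax_move_next eq_bM.
  have [aX|aX] := boolP (a \in X); last first.
    by apply: (@ShapeAddR _ _ _ b); rewrite // YX setD1_notin.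
  apply: (@ShapeSwap _ _ _ a b (X :\ a)); rewrite ?setD11 ?setD1K //.
  by rewrite in_setD1 (negbTE bX) andbF.
Qed.

End MoveOneVote.

Section Plurality.
Variables (C : finType) (n : nat) (pa pa' : 'I_n -> C) (i : 'I_n).
Hypothesis same_elsewhere : forall j, j != i -> pa j = pa' j.

Lemma votes_move c : votes pa' c + (pa i == c) = votes pa c + (pa' i == c).
Proof.
rewrite /votes (cardsD1 i [set j | pa j == c]) (cardsD1 i [set j | pa' j == c]) !inE.
have -> : [set j | pa j == c] :\ i = [set j | pa' j == c] :\ i.
  by apply/setP => j; rewrite !inE; case: eqVneq => // /same_elsewhere->.
lia.
Qed.

Lemma plurality_neighbour_shape : neighbour_shape (plurality pa) (plurality pa').
Proof.
have [same_i|ab] := eqVneq (pa i) (pa' i).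
  have votesE c : votes pa c = votes pa' c by have := votes_move c; rewrite same_i; lia.
  by apply: ShapeEq; apply/setP => c; rewrite !inE; apply: eq_forallb => d; rewrite !votesE.
have [x0 _ max_x0] := @arg_maxnP _ (pa i) predT (votes pa) isT.
apply: (@argmax_move_shape _ (votes pa) (votes pa') (pa i) (pa' i) ab _ _ _ (votes pa x0) x0) => //.
- by have := votes_move (pa i); rewrite eqxx eq_sym (negbTE ab); lia.
- by have := votes_move (pa' i); rewrite eqxx (negbTE ab); lia.
- move=> c ca cb; have := votes_move c.
  by rewrite eq_sym (negbTE ca) eq_sym (negbTE cb); lia.
- by move=> d; apply: max_x0.
Qed.

End Plurality.

Theorem lemma1 (R : realType) (C : finType) (Q : rel C)
  (HQ : strict_linear_order Q) (n : nat) (pa pa' : 'I_n -> C)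
  (Hdiff : differ_in_one_voter pa pa') :
  let X := plurality pa in
  let Y := plurality pa' in
  [<-> stoch_dom Q R X Y;
       entailed Q X Y;
       (forall u : C -> R, consistent Q u -> (set_util u Y < set_util u X)%R);
       match_dom Q X Y].
Proof.
have [i same] := Hdiff.
case: (plurality_neighbour_shape same).
- by move=> ->; apply: dominance_tfae_refl.
- by move=> a -> aY Ya; apply: dominance_tfae_set1l.
- by move=> b -> bX Xb; apply: dominance_tfae_set1r.
- by move=> b X0 bX ->; apply: dominance_tfae_setU1r.
- by move=> a Y0 aY ->; apply: dominance_tfae_setU1l.
- by move=> a b S ab aS bS -> ->; apply: dominance_tfae_swap.
Qed.
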